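(* Let $\gamma>0$, let $\mathscr U\subset\mathbb{T}^2\times(0,T)$ be open and $p:\mathscr U\to\mathbb{R}$ continuous and bounded. Then the map $(x,t)\mapsto K_{\gamma,(x,t)}$ is continuous on $\mathscr U$ with respect to the Hausdorff metric, and $\bigcup_{(x,t)\in\mathscr U}K_{\gamma,(x,t)}$ is bounded.
   Context: $\mathcal S_0^{2\times2}$ is the space of traceless symmetric $2\times2$ matrices, $Z:=\mathbb{R}^2\times\mathbb{R}^2\times\mathcal S_0^{2\times2}\times\mathbb{R}$ with elements $(v,m,\sigma,e)$ and Euclidean metric; $K_{\gamma,(x,t)}:=\{z\in Z: v\otimes v-\sigma=e\,\mathrm{Id},\ m=(e+p(x,t))v,\ e\le\gamma\}$. *)

From HB Require Import structures.
From mathcomp Require Import all_boot all_order all_algebra.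
From mathcomp Require Import all_classical all_reals all_analysis.
Set Implicit Arguments. Unset Strict Implicit. Unset Printing Implicit Defensive.
Import Order.TTheory GRing.Theory Num.Theory.
Import numFieldNormedType.Exports.
Local Open Scope classical_set_scope.
Local Open Scope ring_scope.

Section Defs.
Variable R : realType.

(* Z = R^2 x R^2 x S_0^{2x2} x R ; elements (v, m, sigma, e).
   v, m are row vectors; sigma is a 2x2 matrix, membership in S_0
   (symmetric, traceless) is imposed in the definition of K. *)
Definition Z := ('rV[R]_2 * 'rV[R]_2 * 'M[R]_2 * R)%type.

Definition sqnorm m n (u : 'M[R]_(m, n)) : R := \sum_i \sum_j (u i j) ^+ 2.

Definition zdist (z w : Z) : R :=
  let '(v, m, s, e) := z in let '(v', m', s', e') := w in
  Num.sqrt (sqnorm (v - v') + sqnorm (m - m') + sqnorm (s - s') + (e - e') ^+ 2).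

Definition zero_Z : Z := (0, 0, 0, 0).

Definition hausdorff (A B : set Z) : \bar R :=
  maxe (ereal_sup [set ereal_inf [set (zdist a b)%:E | b in B] | a in A])
       (ereal_sup [set ereal_inf [set (zdist a b)%:E | a in A] | b in B]).

(* K_{gamma,(x,t)} with pressure p; v (x) v = v^T *m v for a row vector v *)
Definition Kset (p : 'rV[R]_2 * R -> R) (gamma : R) (q : 'rV[R]_2 * R) : set Z :=
  [set z | let '(v, m, s, e) := z in
     [/\ s^T = s, \tr s = 0,
         v^T *m v - s = e%:M,
         m = (e + p q) *: v & e <= gamma]].

(* integer translates, used to encode the torus T^2 = R^2 / Z^2 *)
Definition ztrans (k : 'rV[int]_2) : 'rV[R]_2 := map_mx (fun a : int => a%:~R) k.

End Defs.

From HB Require Import structures.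
From mathcomp Require Import all_boot all_order all_algebra.
From mathcomp Require Import all_classical all_reals all_analysis.
From mathcomp Require Import lra ring.
Import Order.TTheory GRing.Theory Num.Theory.
Import numFieldNormedType.Exports.
Local Open Scope classical_set_scope.
Local Open Scope ring_scope.
Set Implicit Arguments.
Unset Strict Implicit.

(* A point (v, m, sigma, e) of K is determined by v and e: the constraint
   v (x) v - sigma = e Id gives sigma = v (x) v - e Id, and tracelessness then
   forces |v|^2 = 2e. The pressure enters only through m = (e + p) v, so keeping
   (v, sigma, e) and resetting m to (e + p') v moves a point of K_{(x,t)} into
   K_{(x',t')} by |p - p'| |v| <= |p - p'| sqrt(2 gamma). Hence the Hausdorff
   distance between the two sets is at most sqrt(2 gamma) |p(x,t) - p(x',t')|,
   and continuity of p gives continuity of the set-valued map. Boundedness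
   follows from |v|^2 = 2e <= 2 gamma, |sigma|^2 = 2e^2 and |m| = |e + p| |v|. *)

Section EuclideanZ.
Variable R : realType.

Lemma sqnorm_ge0 m n (u : 'M[R]_(m, n)) : 0 <= sqnorm u.
Proof. by apply: sumr_ge0 => i _; apply: sumr_ge0 => j _; apply: sqr_ge0. Qed.

Lemma sqnormZ m n c (u : 'M[R]_(m, n)) : sqnorm (c *: u) = c ^+ 2 * sqnorm u.
Proof.
rewrite /sqnorm mulr_sumr; apply: eq_bigr => i _; rewrite mulr_sumr.
by apply: eq_bigr => j _; rewrite mxE exprMn.
Qed.

Lemma sqnorm0 m n : sqnorm (0 : 'M[R]_(m, n)) = 0.
Proof. by rewrite -(scale0r (0 : 'M[R]_(m, n))) sqnormZ expr0n mul0r. Qed.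

Lemma sqnormN m n (u : 'M[R]_(m, n)) : sqnorm (- u) = sqnorm u.
Proof. by rewrite -scaleN1r sqnormZ sqrrN expr1n mul1r. Qed.

Lemma sqnorm_rV2 (v : 'rV[R]_2) : sqnorm v = v ord0 0 ^+ 2 + v ord0 1 ^+ 2.
Proof.
rewrite /sqnorm big_ord1 !big_ord_recr big_ord0 /= add0r.
by congr (v _ _ ^+ 2 + v _ _ ^+ 2); apply: val_inj.
Qed.

Lemma sqnorm_M2 (s : 'M[R]_2) :
  sqnorm s = s 0 0 ^+ 2 + s 0 1 ^+ 2 + (s 1 0 ^+ 2 + s 1 1 ^+ 2).
Proof.
rewrite /sqnorm !big_ord_recr !big_ord0 /= !add0r.
by congr (s _ _ ^+ 2 + s _ _ ^+ 2 + (s _ _ ^+ 2 + s _ _ ^+ 2)); apply: val_inj.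
Qed.

Lemma mxtrace2 (s : 'M[R]_2) : \tr s = s 0 0 + s 1 1.
Proof.
rewrite /mxtrace !big_ord_recr big_ord0 /= add0r.
by congr (s _ _ + s _ _); apply: val_inj.
Qed.

Lemma zdistC (z w : Z R) : zdist z w = zdist w z.
Proof.
case: z => [[[v m] s] e]; case: w => [[[v' m'] s'] e'] /=.
by rewrite -(opprB v) -(opprB m) -(opprB s) -(opprB e) !sqnormN sqrrN.
Qed.

Lemma hausdorff_le (A B : set (Z R)) (r : R) :
  (forall a, A a -> exists2 b, B b & zdist a b <= r) ->
  (forall b, B b -> exists2 a, A a & zdist a b <= r) ->
  (hausdorff A B <= r%:E)%E.
Proof.
move=> AB BA; rewrite /hausdorff ge_max; apply/andP; split.
  apply: ge_ereal_sup => _ [a Aa <-]; have [b Bb ab] := AB a Aa.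
  by apply: le_trans (_ : _ <= (zdist a b)%:E)%E _; [apply: ereal_inf_lbound; exists b|].
apply: ge_ereal_sup => _ [b Bb <-]; have [a Aa ab] := BA b Bb.
by apply: le_trans (_ : _ <= (zdist a b)%:E)%E _; [apply: ereal_inf_lbound; exists a|].
Qed.

End EuclideanZ.

Section Kset.
Variables (R : realType) (p : 'rV[R]_2 * R -> R) (gamma : R).
Implicit Types (q : 'rV[R]_2 * R) (v m : 'rV[R]_2) (s : 'M[R]_2) (e : R).

Lemma Kset_sigmaE q v m s e : Kset p gamma q (v, m, s, e) ->
  forall i j, s i j = v ord0 i * v ord0 j - e *+ (i == j).
Proof.
case=> _ _ /matrixP outer _ _ i j; move: (outer i j).
by rewrite !mxE big_ord1 !mxE => <-; ring.
Qed.

Lemma Kset_sqnorm_v q v m s e : Kset p gamma q (v, m, s, e) -> sqnorm v = 2 * e.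
Proof.
move=> Kq; have sE := Kset_sigmaE Kq; case: Kq => _ + _ _ _.
by rewrite mxtrace2 !sE sqnorm_rV2 /= !expr2 => ?; lra.
Qed.

Lemma Kset_sqnorm_sigma q v m s e :
  Kset p gamma q (v, m, s, e) -> sqnorm s = 2 * e ^+ 2.
Proof.
move=> Kq; have := Kset_sqnorm_v Kq; rewrite sqnorm_rV2 sqnorm_M2 !(Kset_sigmaE Kq) /=.
by rewrite !expr2 => vE; nra.
Qed.

Lemma Kset_e_ge0 q v m s e : Kset p gamma q (v, m, s, e) -> 0 <= e.
Proof. by move=> /Kset_sqnorm_v vE; have := sqnorm_ge0 v; rewrite vE; lra. Qed.

Lemma Kset_approx q q' a : Kset p gamma q a ->
  exists2 b, Kset p gamma q' b & zdist a b <= `|p q - p q'| * Num.sqrt (2 * gamma).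
Proof.
case: a => [[[v m] s] e] Kq.
have vE := Kset_sqnorm_v Kq; have e_ge0 := Kset_e_ge0 Kq.
case: Kq => sT trs outer mE e_le; exists (v, (e + p q') *: v, s, e); first by [].
rewrite /= !subrr !sqnorm0 expr0n /= mE -scalerBl sqnormZ !(addr0, add0r).
have -> : e + p q - (e + p q') = p q - p q' by ring.
rewrite sqrtrM ?sqr_ge0 // sqrtr_sqr ler_wpM2l // ler_sqrt; lra.
Qed.

Lemma hausdorff_Kset_le q q' :
  (hausdorff (Kset p gamma q) (Kset p gamma q')
     <= (`|p q - p q'| * Num.sqrt (2 * gamma))%:E)%E.
Proof.
apply: hausdorff_le => [a /Kset_approx //|b /(Kset_approx q) [a Ka ab]].
by exists a; rewrite // zdistC distrC.
Qed.

Lemma Kset_zdist0_le q z M : `|p q| <= M -> Kset p gamma q z ->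
  zdist z (zero_Z R) <=
    Num.sqrt (2 * gamma + (gamma + M) ^+ 2 * (2 * gamma) + 2 * gamma ^+ 2 + gamma ^+ 2).
Proof.
case: z => [[[v m] s] e] pM Kq.
have vE := Kset_sqnorm_v Kq; have sE := Kset_sqnorm_sigma Kq.
have e_ge0 := Kset_e_ge0 Kq; case: Kq => _ _ _ mE e_le.
move: pM; rewrite ler_norml => /andP[pMl pMr].
have epM : (e + p q) ^+ 2 <= (gamma + M) ^+ 2 by rewrite !expr2; nra.
rewrite /zdist /zero_Z !subr0 mE sqnormZ vE sE ler_sqrt; last by nra.
have : (e + p q) ^+ 2 * (2 * e) <= (gamma + M) ^+ 2 * (2 * gamma).
  by apply: ler_pM; rewrite ?sqr_ge0 //; lra.
by rewrite !expr2; nra.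
Qed.

End Kset.

Theorem lemma2p12 (R : realType) (T gamma : R) (U : set ('rV[R]_2 * R))
  (p : 'rV[R]_2 * R -> R) :
  0 < gamma ->
  (* U is (the lift of) an open subset of T^2 x (0,T) *)
  open U ->
  (forall q, U q -> 0 < q.2 < T) ->
  (forall (k : 'rV[int]_2) x t, U (x, t) <-> U (x + ztrans R k, t)) ->
  (* p is (the lift of) a continuous bounded function on U *)
  (forall (k : 'rV[int]_2) x t, U (x, t) -> p (x + ztrans R k, t) = p (x, t)) ->
  {within U, continuous p} ->
  (exists M : R, forall q, U q -> `|p q| <= M) ->
  (forall q, U q -> forall eps : R, 0 < eps ->
     \forall q' \near q, U q' -> (hausdorff (Kset p gamma q) (Kset p gamma q') < eps%:E)%E)
  /\
  (exists B : R, forall q, U q -> forall z, Kset p gamma q z -> zdist z (zero_Z R) <= B).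
Proof.
move=> gamma_gt0 oU _ _ _ p_cont [M pM]; split; last first.
  by eexists => q Uq z Kz; exact: Kset_zdist0_le (pM q Uq) Kz.
move=> q Uq eps eps_gt0.
set c := Num.sqrt (2 * gamma).
have c_gt0 : 0 < c by rewrite sqrtr_gt0; lra.
have p_cont_q : {for q, continuous p}.
  by move: p_cont; rewrite continuous_open_subspace // => /(_ q); apply; rewrite inE.
have near_q := (cvgrPdist_lt _ _).1 p_cont_q (eps / c) (divr_gt0 eps_gt0 c_gt0).
apply: filterS (near_q _) => q' pqq' _.
apply: le_lt_trans (hausdorff_Kset_le _ _ _ _) _.
by rewrite lte_fin -ltr_pdivlMr.
Qed.
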